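(* Let $Y$ be a compact metric space with a finite Borel measure $\nu$, $H_Y=L^2(Y,\nu)$, and let $X\subset H_Y$ be a finite-dimensional $C^1$ submanifold carrying a $C^1$ flow $\Phi^t:X\to X$ with a Borel ergodic invariant probability measure $\mu$ of compact support. The observation map is the inclusion, so $F_y(x)=x(y)$. Let $\Omega=X\times Y$, $\rho=\mu\times\nu$, $H_\Omega=L^2(\Omega,\rho)$. Fix $\tau>0$ and for $Q\in\mathbb{N}$ let $\tilde F_Q(x,y)=(F_y(x),F_y(\Phi^{-\tau}x),\ldots,F_y(\Phi^{-(Q-1)\tau}x))\in\mathbb{R}^Q$. Let $(k_Q)_{Q\in\mathbb{N}}$ be kernels $k_Q:\Omega\times\Omega\to\mathbb{R}$ such that (i) $k_Q(\omega,\omega')=\tilde k_Q(\tilde F_Q(\omega),\tilde F_Q(\omega'))$ for a continuous $\tilde k_Q:\mathbb{R}^Q\times\mathbb{R}^Q\to\mathbb{R}$; (ii) $k_Q\to k_\infty$ in $L^2(\Omega\times\Omega,\rho\times\rho)$; (iii) $k_\infty((\Phi^t x,y),(\Phi^t x',y'))=k_\infty((x,y),(x',y'))$ for all $t$ and $\rho\times\rho$-a.e. pair. Let $K_Q:H_\Omega\to H_\Omega$, $K_Qf(\omega)=\int_\Omega k_Q(\omega,\omega')f(\omega')\,d\rho(\omega')$, and let $\tilde U^t f=f\circ(\Phi^t\times \mathrm{id}_Y)$ be the Koopman operators on $H_\Omega$. Let $G$ be a topological group with a continuous left action $\Gamma^g_Y$ on $Y$ preserving $\nu$-null sets, such that $X$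 is invariant under $\Gamma_X^g(x)=x\circ\Gamma_Y^{g^{-1}}$, with $\Gamma_X^g\circ\Phi^t=\Phi^t\circ\Gamma_X^g$ for all $t,g$. Let $\Gamma^g_\Omega=\Gamma^g_X\times\Gamma^g_Y$ and assume $\Gamma^g_\Omega$ preserves $\rho$; define the unitary operators $R^g_\Omega f=f\circ\Gamma^g_\Omega$ on $H_\Omega$. Then for every $g\in G$, $t\in\mathbb{R}$ and $Q\in\mathbb{N}$, $R^g_\Omega$ commutes with $K_Q$ and with $\tilde U^t$, and moreover $R^g_\Omega K_Q=K_Q$.
   Context: Elements of $X$ are regarded as pointwise-evaluable functions on $Y$, $x(y)$ being the value of the state $x$ at $y$. *)

From HB Require Import structures.
From mathcomp Require Import all_boot all_order all_algebra.
From mathcomp Require Import all_classical all_reals all_analysis.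

Set Implicit Arguments.
Unset Strict Implicit.
Unset Printing Implicit Defensive.

Import Order.TTheory GRing.Theory Num.Theory.
Import numFieldNormedType.Exports.

Local Open Scope classical_set_scope.
Local Open Scope ring_scope.

Notation borel T := (g_sigma_algebraType (@open T)).

Definition msupport {R : realType} (T : ptopologicalType)
  (m : set (borel T) -> \bar R) : set T :=
  [set x | forall U : set T, open U -> U x -> (0 < m U)%E].

Definition flow_invariant_set {R : realType} {X : Type}
  (Phi : R -> X -> X) (A : set X) : Prop :=
  forall t, Phi t @^-1` A = A.

Definition ergodic {R : realType} {d} {X : measurableType d}
  (m : set X -> \bar R) (Phi : R -> X -> X) : Prop :=
  forall A : set X, measurable A -> flow_invariant_set Phi A ->
    m A = 0%E \/ m A = 1%E.

(** Delay-coordinate observation map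
    F~_Q(x, y) = (x(y), (Phi^{-tau} x)(y), ..., (Phi^{-(Q-1)tau} x)(y)) in R^Q,
    where [ev x y] = x(y) is the evaluation of the state x at y. *)
Definition delay_obs {R : realType} {X Y : Type} (ev : X -> Y -> R)
  (Phi : R -> X -> X) (tau : R) (Q : nat) (w : X * Y) : 'rV[R]_Q :=
  \row_(i < Q) ev (Phi (- ((i%:R) * tau)) w.1) w.2.

Definition kernel_op {R : realType} {d} {T : measurableType d}
  (rho : {measure set T -> \bar R}) (k : T -> T -> R) (f : T -> R) : T -> R :=
  fun w => Rintegral rho [set: T] (fun w' => k w w' * f w').

Definition comp_op {T : Type} {R : Type} (S : T -> T) (f : T -> R) : T -> R :=
  f \o S.

(** Product of two finite measures: this is literally the library's product
    measure [m1 \x m2] (product_measure1); the alias only serves to register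
    (with a proof) that the product of finite measures is again a finite
    measure, so that products can be iterated (rho x rho with rho = mu x nu). *)
Section fmprod.
Context (d1 d2 : measure_display) (T1 : measurableType d1)
  (T2 : measurableType d2) (R : realType).
Variables (m1 : {finite_measure set T1 -> \bar R})
  (m2 : {finite_measure set T2 -> \bar R}).

Definition fmprod : set (T1 * T2)%type -> \bar R := (m1 \x m2)%E.

HB.instance Definition _ := Measure.copy fmprod (m1 \x m2)%E.

Lemma fmprod_fin : fin_num_fun fmprod.
Proof.
move=> A mA; rewrite ge0_fin_numE ?measure_ge0//.
apply: (le_lt_trans (le_measure _ _ _ (subsetT A))); rewrite ?inE//.
suff : ((m1 \x m2) [set: (T1 * T2)%type] < +oo)%E by [].
rewrite -setXTT product_measure1E// lte_mul_pinfty// ?measure_ge0//.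
  by rewrite fin_num_measure.
by rewrite -ge0_fin_numE ?measure_ge0// fin_num_measure.
Qed.

HB.instance Definition _ := Measure_isFinite.Build _ _ _ fmprod fmprod_fin.
End fmprod.
Arguments fmprod {d1 d2 T1 T2 R} m1 m2.

(** The kernel [k_Q] factors through the delay-coordinate map [F~_Q], and
    [F~_Q] is invariant under [Gamma_Omega^g]: since [Gamma_X^g] commutes
    with the flow, [(Phi^s (Gamma_X^g x)) (Gamma_Y^g y) = (Phi^s x) y].
    Hence [k_Q] is invariant under [Gamma_Omega^g] in each argument
    separately.  Invariance in the first argument gives [R^g K_Q = K_Q];
    invariance in the second one, together with the [rho]-preservation of
    [Gamma_Omega^g] (a change of variables in the integral), gives
    [K_Q R^g = K_Q]. *)
From HB Require Import structures.
From mathcomp Require Import all_boot all_order all_algebra.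
From mathcomp Require Import all_classical all_reals all_analysis.
From mathcomp Require Import measurable_realfun.

Import Order.TTheory GRing.Theory Num.Theory.
Import numFieldNormedType.Exports.

Local Open Scope classical_set_scope.
Local Open Scope ring_scope.

Lemma comp_op_comm (T V : Type) (S S' : T -> T) (f : T -> V) :
  (forall x, S (S' x) = S' (S x)) ->
  comp_op S (comp_op S' f) = comp_op S' (comp_op S f).
Proof. by move=> SS'; apply/funext => x; rewrite /comp_op /= SS'. Qed.

Lemma delay_obs_comp_invariant (R : realType) (X Y : Type) (ev : X -> Y -> R)
    (Phi : R -> X -> X) (tau : R) (Q : nat) (S : X * Y -> X * Y) :
  (forall s w, ev (Phi s (S w).1) (S w).2 = ev (Phi s w.1) w.2) ->
  forall w, delay_obs ev Phi tau Q (S w) = delay_obs ev Phi tau Q w.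
Proof. by move=> evS w; apply/rowP => i; rewrite !mxE evS. Qed.

Section measure_preserving.
Context d (T : measurableType d) (R : realType).
Variables (m : {measure set T -> \bar R}) (gam : T -> T).
Hypothesis mgam : measurable_fun [set: T] gam.
Hypothesis gam_pres : forall A, measurable A -> m (gam @^-1` A) = m A.

(* No integrability is needed: both sides are [\int f^+ - \int f^-] and the
   positive and negative parts are transported separately. *)
Lemma integral_comp_measure_preserving (h : T -> \bar R) :
  measurable_fun [set: T] h -> (\int[m]_x (h \o gam) x = \int[m]_x h x)%E.
Proof.
move=> mh.
rewrite [RHS](@eq_measure_integral _ _ _ _ (pushforward m gam)); last first.
  by move=> A mA _; exact/esym/gam_pres.
rewrite integralE [RHS]integralE funepos_comp funeneg_comp.
rewrite [X in (_ = X - _)%E]ge0_integral_pushforward //; last exact: measurable_funepos.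
rewrite [X in (_ = _ - X)%E]ge0_integral_pushforward //; last exact: measurable_funeneg.
Qed.

Lemma Rintegral_comp_measure_preserving (h : T -> R) :
  measurable_fun [set: T] h ->
  Rintegral m [set: T] (h \o gam) = Rintegral m [set: T] h.
Proof.
move=> mh; rewrite /Rintegral -(integral_comp_measure_preserving (EFin \o h)) //.
exact/measurable_EFinP.
Qed.

Lemma kernel_op_comp_invariantl (k : T -> T -> R) (f : T -> R) :
  (forall w w', k (gam w) w' = k w w') ->
  comp_op gam (kernel_op m k f) = kernel_op m k f.
Proof.
move=> kgam; apply/funext => w; rewrite /comp_op /kernel_op /=.
by under eq_Rintegral do rewrite kgam.
Qed.

Lemma kernel_op_comp_invariantr (k : T -> T -> R) (f : T -> R) :
  (forall w, measurable_fun [set: T] (k w)) -> measurable_fun [set: T] f ->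
  (forall w w', k w (gam w') = k w w') ->
  kernel_op m k (comp_op gam f) = kernel_op m k f.
Proof.
move=> mk mf kgam; apply/funext => w; rewrite /kernel_op /comp_op.
under eq_Rintegral do rewrite -kgam.
apply: (Rintegral_comp_measure_preserving (fun w' => k w w' * f w')).
exact: measurable_funM.
Qed.

End measure_preserving.

Theorem theorem1
  (R : realType)
  (* Y : compact metric space with a finite Borel measure nu *)
  (Y : pseudoPMetricType R) (hY_haus : hausdorff_space Y)
  (hY_cpt : compact [set: Y])
  (nu : {finite_measure set (borel Y) -> \bar R})
  (* X : the set of states, a subset of H_Y = L^2(Y, nu); [ev x y] = x(y) *)
  (X : pseudoPMetricType R) (ev : X -> Y -> R)
  (hev_L2 : forall x : X, measurable_fun [set: borel Y] (ev x) /\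
              (Lnorm nu 2%:E (EFin \o ev x) < +oo)%E)
  (hev_inj : forall x x' : X, {ae nu, forall y, ev x y = ev x' y} -> x = x')
  (hX_ball : forall (x : X) (e : R), 0 < e ->
     ball x e = [set x' | (Lnorm nu 2%:E (EFin \o (ev x \- ev x')%R) < e%:E)%E])
  (hev_meas : measurable_fun [set: borel X * borel Y]
                (fun w : borel X * borel Y => ev w.1 w.2))
  (* the flow Phi on X *)
  (Phi : R -> X -> X)
  (hPhi0 : forall x, Phi 0 x = x)
  (hPhiD : forall s t x, Phi (s + t) x = Phi s (Phi t x))
  (hPhi_cont : continuous (fun p : R * X => Phi p.1 p.2))
  (* mu : Borel ergodic invariant probability measure of compact support *)
  (mu : probability (borel X) R)
  (hmu_inv : forall (t : R) (A : set (borel X)), measurable A ->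
     mu (Phi t @^-1` A) = mu A)
  (hmu_erg : ergodic mu Phi)
  (hmu_supp : compact (msupport mu))
  (* delay time *)
  (tau : R) (htau : 0 < tau)
  (* kernels k_Q and their limit k_infty on Omega = X x Y, rho = mu x nu *)
  (k : nat -> borel X * borel Y -> borel X * borel Y -> R)
  (kinf : (borel X * borel Y) * (borel X * borel Y) -> R)
  (hk_i : forall Q : nat, exists kt : 'rV[R]_Q -> 'rV[R]_Q -> R,
     continuous (fun p : 'rV[R]_Q * 'rV[R]_Q => kt p.1 p.2) /\
     forall w w', k Q w w' = kt (delay_obs ev Phi tau Q w) (delay_obs ev Phi tau Q w'))
  (hk_L2 : forall Q : nat,
     measurable_fun [set: (borel X * borel Y) * (borel X * borel Y)]
       (fun p => k Q p.1 p.2) /\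
     (Lnorm (fmprod (fmprod mu nu) (fmprod mu nu)) 2%:E (EFin \o (fun p => k Q p.1 p.2)) < +oo)%E)
  (hkinf_L2 : measurable_fun [set: (borel X * borel Y) * (borel X * borel Y)] kinf /\
     (Lnorm (fmprod (fmprod mu nu) (fmprod mu nu)) 2%:E (EFin \o kinf) < +oo)%E)
  (hk_ii : (fun Q : nat => Lnorm (fmprod (fmprod mu nu) (fmprod mu nu)) 2%:E
              (EFin \o (fun p => k Q p.1 p.2 - kinf p)%R)) @ \oo --> 0%E)
  (hk_iii : forall t : R, {ae (fmprod (fmprod mu nu) (fmprod mu nu)),
     forall p : (borel X * borel Y) * (borel X * borel Y),
       kinf ((Phi t p.1.1, p.1.2), (Phi t p.2.1, p.2.2)) = kinf p})
  (* G : topological group *)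
  (G : topologicalType) (gmul : G -> G -> G) (ginv : G -> G) (g1 : G)
  (hG_assoc : forall a b c, gmul a (gmul b c) = gmul (gmul a b) c)
  (hG_mul1g : forall a, gmul g1 a = a) (hG_mulg1 : forall a, gmul a g1 = a)
  (hG_mulVg : forall a, gmul (ginv a) a = g1) (hG_mulgV : forall a, gmul a (ginv a) = g1)
  (hG_mul_cont : continuous (fun p : G * G => gmul p.1 p.2))
  (hG_inv_cont : continuous ginv)
  (* continuous left action of G on Y preserving nu-null sets *)
  (GY : G -> Y -> Y)
  (hGY1 : forall y, GY g1 y = y)
  (hGYM : forall a b y, GY (gmul a b) y = GY a (GY b y))
  (hGY_cont : continuous (fun p : G * Y => GY p.1 p.2))
  (hGY_null : forall (g : G) (A : set (borel Y)), measurable A -> nu A = 0%E ->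
     nu (GY g @^-1` A) = 0%E)
  (* induced action on X: Gamma_X^g x = x o Gamma_Y^{g^-1}, X is invariant *)
  (GX : G -> X -> X)
  (hGX : forall g x y, ev (GX g x) y = ev x (GY (ginv g) y))
  (hGX_Phi : forall g t x, GX g (Phi t x) = Phi t (GX g x))
  (* Gamma_Omega^g = Gamma_X^g x Gamma_Y^g preserves rho *)
  (hGO_meas : forall g : G, measurable_fun [set: borel X * borel Y]
     (fun w : borel X * borel Y => ((GX g w.1, GY g w.2) : borel X * borel Y)))
  (hGO_pres : forall (g : G) (A : set (borel X * borel Y)), measurable A ->
     (fmprod mu nu) ((fun w : borel X * borel Y => ((GX g w.1, GY g w.2) : borel X * borel Y)) @^-1` A)
     = (fmprod mu nu) A) :
  forall (g : G) (t : R) (Q : nat) (f : borel X * borel Y -> R),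
    measurable_fun [set: borel X * borel Y] f ->
    (Lnorm (fmprod mu nu) 2%:E (EFin \o f) < +oo)%E ->
    let RO := comp_op (fun w : borel X * borel Y => ((GX g w.1, GY g w.2) : borel X * borel Y)) in
    let Ut := comp_op (fun w : borel X * borel Y => ((Phi t w.1, w.2) : borel X * borel Y)) in
    let KQ := kernel_op (fmprod mu nu) (k Q) in
    {ae (fmprod mu nu), forall w, RO (KQ f) w = KQ (RO f) w} /\
    {ae (fmprod mu nu), forall w, RO (Ut f) w = Ut (RO f) w} /\
    {ae (fmprod mu nu), forall w, RO (KQ f) w = KQ f w}.
Proof.
move=> g t Q f mf _ RO Ut KQ.
set gam := fun w : borel X * borel Y => ((GX g w.1, GY g w.2) : borel X * borel Y).
have obs_gam w : delay_obs ev Phi tau Q (gam w) = delay_obs ev Phi tau Q w.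
  by apply: delay_obs_comp_invariant => s [x y]; rewrite /= -hGX_Phi hGX -hGYM hG_mulVg hGY1.
have [kt [_ k_kt]] := hk_i Q.
have kQ_gaml w w' : k Q (gam w) w' = k Q w w' by rewrite !k_kt obs_gam.
have kQ_gamr w w' : k Q w (gam w') = k Q w w' by rewrite !k_kt obs_gam.
have mkQ w : measurable_fun [set: borel X * borel Y] (k Q w).
  exact: (measurable_fun_pair2 w (proj1 (hk_L2 Q))).
have RK : RO (KQ f) = KQ f by exact: kernel_op_comp_invariantl.
have KR : KQ (RO f) = KQ f.
  by rewrite /KQ /RO; apply: (kernel_op_comp_invariantr _ _ _ _ _ (hGO_meas g) (hGO_pres g)).
split; last split; apply: aeW => w.
- by rewrite RK KR.
- by rewrite /RO /Ut comp_op_comm // => -[x y]; rewrite /= hGX_Phi.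
- by rewrite RK.
Qed.
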